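(* Let $\mathcal G$ be a family of nonempty subsets of the finite set $\Omega$ that is closed under unions and nonempty intersections and covers $\Omega$, and let $G\in\mathcal G$. Let $\mu_1,\dots,\mu_K$ be the distinct $\mathcal G$-atoms contained in $G$, listed in any order such that $\mu_r\subsetneq\mu_s$ implies $r<s$, and put $U_j=\bigcup_{k=1}^j\mu_k$. Then (i) $G=\bigcup_{k=1}^K\mu_k$; and (ii) for every $j=2,\dots,K$, $U_{j-1}\cap\mu_j=\bigcup\{\mu_r: r<j,\ \mu_r\subsetneq\mu_j\}$.
   Context: The $\mathcal G$-atoms are the sets $m(\omega)=\bigcap\{H\in\mathcal G:\omega\in H\}$ for $\omega\in\Omega$. *)

From mathcomp Require Import all_boot.
Set Implicit Arguments. Unset Strict Implicit. Unset Printing Implicit Defensive.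

Definition atom (Omega : finType) (fam : {set {set Omega}}) (w : Omega) : {set Omega} :=
  \bigcap_(H in fam | w \in H) H.

Definition is_atom (Omega : finType) (fam : {set {set Omega}}) (A : {set Omega}) : Prop :=
  exists w : Omega, A = atom fam w.

From mathcomp Require Import all_boot.
Set Implicit Arguments. Unset Strict Implicit. Unset Printing Implicit Defensive.

(* Every w in G lies in its own atom m(w), which is contained in G, so the
   atoms inside G cover G.  For (ii), a point w of U_(j-1) and mu_j lies in
   some mu_k with k < j; its atom m(w) is one of the mu_r and is contained
   in both mu_k and mu_j.  It cannot equal mu_j, for then mu_j would be
   contained in mu_k, which the ordering forbids for k < j; hence
   mu_r is a proper subset of mu_j and r < j. *)

Section Atoms.
Variables (Omega : finType) (fam : {set {set Omega}}).
Hypothesis famI :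
  forall A B, A \in fam -> B \in fam -> A :&: B != set0 -> A :&: B \in fam.
Hypothesis fam_cover : \bigcup_(A in fam) A = [set: Omega].

Lemma mem_atom w : w \in atom fam w.
Proof. by apply/bigcapP => H /andP[]. Qed.

Lemma atom_min {w H} : H \in fam -> w \in H -> atom fam w \subset H.
Proof. by move=> Hfam wH; apply: bigcap_inf; rewrite Hfam wH. Qed.

(* Fixing a member H0 containing w makes every partial intersection a
   nonempty member of fam, to which famI applies. *)
Lemma atom_in_fam w : atom fam w \in fam.
Proof.
have /bigcupP[H0 H0fam wH0] : w \in \bigcup_(A in fam) A by rewrite fam_cover inE.
rewrite -(setIidPr (atom_min H0fam wH0)).
suff /andP[] : (H0 :&: atom fam w \in fam) && (w \in atom fam w) by [].
rewrite /atom; elim/big_rec: _ => [|H X /andP[Hfam wH] /andP[H0Xfam wX]].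
  by rewrite setIT H0fam inE.
rewrite setICA inE wH wX andbT famI //.
by apply/set0Pn; exists w; rewrite !inE wH wH0.
Qed.

Lemma atom_sub_atom A w : is_atom fam A -> w \in A -> atom fam w \subset A.
Proof. by case=> v -> wv; apply: atom_min => //; apply: atom_in_fam. Qed.

End Atoms.

Section OrderedSeq.
Variables (T : finType) (mu : seq {set T}).
Hypothesis mu_uniq : uniq mu.
Hypothesis mu_sorted : forall r s, r < size mu -> s < size mu ->
  nth set0 mu r \proper nth set0 mu s -> r < s.

Lemma nth_subset_leq r s : r < size mu -> s < size mu ->
  nth set0 mu r \subset nth set0 mu s -> r <= s.
Proof.
move=> rs ss; rewrite subEproper => /orP[|/mu_sorted-/(_ rs ss)/ltnW //].
by rewrite nth_uniq // => /eqP->.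
Qed.

Lemma nth_proper_of_lower i j k : i < size mu -> j < size mu -> k < j ->
  nth set0 mu i \subset nth set0 mu j -> nth set0 mu i \subset nth set0 mu k ->
  nth set0 mu i \proper nth set0 mu j.
Proof.
move=> ilt jlt kj sij sik; have klt := ltn_trans kj jlt.
rewrite properEneq sij andbT; apply: contraTneq kj => Eij.
by rewrite -leqNgt nth_subset_leq -?Eij.
Qed.

End OrderedSeq.

Theorem lemma5 (Omega : finType) (fam : {set {set Omega}}) (G : {set Omega})
  (mu : seq {set Omega}) :
  set0 \notin fam ->
  (forall A B, A \in fam -> B \in fam -> A :|: B \in fam) ->
  (forall A B, A \in fam -> B \in fam -> A :&: B != set0 -> A :&: B \in fam) ->
  \bigcup_(A in fam) A = [set: Omega] ->
  G \in fam ->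
  uniq mu ->
  (forall A, A \in mu <-> (is_atom fam A /\ A \subset G)) ->
  (forall r s, r < size mu -> s < size mu ->
     nth set0 mu r \proper nth set0 mu s -> r < s) ->
  G = \bigcup_(A <- mu) A /\
  (forall j, 0 < j < size mu ->
     (\bigcup_(k < j) nth set0 mu k) :&: nth set0 mu j =
     \bigcup_(r < j | nth set0 mu r \proper nth set0 mu j) nth set0 mu r).
Proof.
move=> _ _ famI cover Gfam mu_uniq mu_atoms mu_sorted.
have atom_in_mu w : w \in G -> atom fam w \in mu.
  by move=> wG; apply/mu_atoms; split; [exists w | apply: atom_min].
have nth_atom i : i < size mu -> is_atom fam (nth set0 mu i).
  by move=> ilt; have /mu_atoms[] := mem_nth set0 ilt.
split.
  apply/setP => w; rewrite bigcup_seq; apply/idP/bigcupP => [wG | [A /mu_atoms[_ AG]]].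
    by exists (atom fam w); [apply: atom_in_mu | apply: mem_atom].
  exact: subsetP.
move=> j /andP[_ jlt]; apply/setP => w; apply/idP/idP; last first.
  case/bigcupP => r jr wr; rewrite inE (subsetP (proper_sub jr)) // andbT.
  by apply/bigcupP; exists r.
case/setIP => /bigcupP[k _ wk] wj.
have wG : w \in G by have /mu_atoms[_ /subsetP->] := mem_nth set0 jlt.
pose i := index (atom fam w) mu.
have ilt : i < size mu by rewrite index_mem atom_in_mu.
have nth_i : nth set0 mu i = atom fam w by rewrite nth_index ?atom_in_mu.
have ij : nth set0 mu i \proper nth set0 mu j.
  apply: (nth_proper_of_lower mu_uniq mu_sorted ilt jlt (ltn_ord k));
  rewrite nth_i (atom_sub_atom famI cover) //; first exact: nth_atom.
  exact/nth_atom/(ltn_trans _ jlt).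
apply/bigcupP; exists (Ordinal (mu_sorted _ _ ilt jlt ij)) => //=.
by rewrite nth_i mem_atom.
Qed.
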